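(* Let $\mathcal{D}$ be an open derivation and let $\mathsf{S}(\mathcal{D})$ be the maximum number of $?$-formulas in the conclusion of a $\mathsf{cp}$ rule of $\mathcal{D}$. If $\mathcal{D}= \mathcal{D}_0 \to_{\mathsf{cut}} \cdots \to_{\mathsf{cut}}\mathcal{D}_n$ then: \begin{enumerate} \item $n$ and $|\mathcal{D}_i|$ are in $\mathcal{O}(\mathsf{S}(\mathcal{D})^3\cdot| \mathcal{D} |^3)$ for any $i\in\{0,\dots,n\}$. \item If only principal cut-elimination steps are applied then $n$ and $|\mathcal{D}_i|$ are in $\mathcal{O}(\mathsf{S}(\mathcal{D})\cdot| \mathcal{D} |)$ for any $i\in\{0,\dots,n\}$. \item If the reduction sequence is maximal then $\mathcal{D}_n$ is cut free. \end{enumerate}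
   Context: Formulas: $A ::= X \mid X^\perp \mid A\otimes A \mid A ⅋ A \mid {!A} \mid {?A} \mid \mathbf{1} \mid \bot \mid \forall X.A \mid \exists X.A$. The rules are axiom, cut, $\otimes$, $⅋$, $\mathbf{1}$, $\bot$, weakening $?\mathsf{w}$ (from $\Gamma$ infer $\Gamma,?A$), absorption $?\mathsf{b}$ (from $\Gamma,A,?A$ infer $\Gamma,?A$), $\forall$, $\exists$ (instantiating only $(!,?)$-free formulas), conditional promotion $\mathsf{cp}$ (from $\Gamma,A$ and $?\Gamma,!A$ infer $?\Gamma,!A$), plus the rule $\mathsf{hyp}$ with no premises and arbitrary conclusion. An open derivation is a finite derivation over these rules; $|\mathcal{D}|$ is its number of rule instances. Cut-elimination $\to_{\mathsf{cut}}$: standard multiplicative, second-order and commutative steps (the latter permute a cut above a non-cut rule), and principal exponential steps: cut of two $\mathsf{cp}$ rules becomes a $\mathsf{cp}$ whose premises are the cuts of the respective left and right premises; cut of $\mathsf{cp}$ (conclusion $?\Gamma,!A$) against $?\mathsf{w}$ on $?A^\perp$ becomes $|\Gamma|$ weakenings; cut of $\mathsf{cp}$ against $?\mathsf{b}$ (premise $\Delta,A^\perp,?A^\perp$) becomes a cut of the left premise $\Gamma,A$ against $A^\perp$ and of the right premise $?\Gamma,!A$ against $?A^\perp$, followed by $|\Gamma|$ absorptions. Non-commutative steps are called principal. *)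

From Stdlib Require Import List Arith Permutation.
Import ListNotations.

Inductive formula : Type :=
| Var : nat -> formula
| Dual : nat -> formula
| Tens : formula -> formula -> formula
| Par : formula -> formula -> formula
| OfC : formula -> formula
| WhyNot : formula -> formula
| One : formula
| Bot : formula
| All : formula -> formula      (* forall X. A, binds index 0 *)
| Ex : formula -> formula.      (* exists X. A, binds index 0 *)

Fixpoint dual (A : formula) : formula :=
  match A with
  | Var n => Dual n
  | Dual n => Var n
  | Tens A B => Par (dual A) (dual B)
  | Par A B => Tens (dual A) (dual B)
  | OfC A => WhyNot (dual A)
  | WhyNot A => OfC (dual A)
  | One => Bot
  | Bot => One
  | All A => Ex (dual A)
  | Ex A => All (dual A)
  end.

Fixpoint lift (k : nat) (A : formula) : formula :=
  match A with
  | Var n => Var (if n <? k then n else S n)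
  | Dual n => Dual (if n <? k then n else S n)
  | Tens A B => Tens (lift k A) (lift k B)
  | Par A B => Par (lift k A) (lift k B)
  | OfC A => OfC (lift k A)
  | WhyNot A => WhyNot (lift k A)
  | One => One
  | Bot => Bot
  | All A => All (lift (S k) A)
  | Ex A => Ex (lift (S k) A)
  end.

(* substitute B (already living at depth k) for index k, decrementing larger ones *)
Fixpoint subst (k : nat) (B : formula) (A : formula) : formula :=
  match A with
  | Var n => if n <? k then Var n else if n =? k then B else Var (pred n)
  | Dual n => if n <? k then Dual n else if n =? k then dual B else Dual (pred n)
  | Tens A1 A2 => Tens (subst k B A1) (subst k B A2)
  | Par A1 A2 => Par (subst k B A1) (subst k B A2)
  | OfC A1 => OfC (subst k B A1)
  | WhyNot A1 => WhyNot (subst k B A1)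
  | One => One
  | Bot => Bot
  | All A1 => All (subst (S k) (lift 0 B) A1)
  | Ex A1 => Ex (subst (S k) (lift 0 B) A1)
  end.

(* (!,?)-free formulas: the only ones allowed as exists-witnesses *)
Fixpoint qfree (A : formula) : Prop :=
  match A with
  | Var _ | Dual _ | One | Bot => True
  | Tens A B | Par A B => qfree A /\ qfree B
  | OfC _ | WhyNot _ => False
  | All A | Ex A => qfree A
  end.

Definition is_whynot (A : formula) : bool :=
  match A with WhyNot _ => true | _ => false end.

(* rule labels carry the principal data *)
Inductive rule : Type :=
| RAx : formula -> rule
| RCut : formula -> rule           (* cut on A (left premise has A, right has A^perp) *)
| RTens : formula -> formula -> rule
| RPar : formula -> formula -> rule
| ROne : rule
| RBot : rule
| RWk : formula -> rule
| RAbs : formula -> rule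
| RAll : formula -> rule           (* introduces forall X. A ; A is the body *)
| REx : formula -> formula -> rule (* introduces exists X. A with witness B *)
| RCp : formula -> rule
| RHyp : rule.

(* a node: rule instance, its conclusion sequent (a list read up to permutation,
   i.e. a multiset), and its premises *)
Inductive deriv : Type :=
| Node : rule -> list formula -> list deriv -> deriv.

Definition concl (d : deriv) : list formula :=
  match d with Node _ G _ => G end.

Inductive valid : deriv -> Prop :=
| v_ax : forall A G, Permutation G [A; dual A] -> valid (Node (RAx A) G [])
| v_cut : forall A G d1 d2 G1 G2, valid d1 -> valid d2 ->
    Permutation (concl d1) (A :: G1) -> Permutation (concl d2) (dual A :: G2) ->
    Permutation G (G1 ++ G2) -> valid (Node (RCut A) G [d1; d2])
| v_tens : forall A B G d1 d2 G1 G2, valid d1 -> valid d2 ->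
    Permutation (concl d1) (A :: G1) -> Permutation (concl d2) (B :: G2) ->
    Permutation G (Tens A B :: G1 ++ G2) -> valid (Node (RTens A B) G [d1; d2])
| v_par : forall A B G d D, valid d ->
    Permutation (concl d) (A :: B :: D) -> Permutation G (Par A B :: D) ->
    valid (Node (RPar A B) G [d])
| v_one : forall G, Permutation G [One] -> valid (Node ROne G [])
| v_bot : forall G d, valid d -> Permutation G (Bot :: concl d) -> valid (Node RBot G [d])
| v_wk : forall A G d, valid d -> Permutation G (WhyNot A :: concl d) ->
    valid (Node (RWk A) G [d])
| v_abs : forall A G d D, valid d ->
    Permutation (concl d) (A :: WhyNot A :: D) -> Permutation G (WhyNot A :: D) ->
    valid (Node (RAbs A) G [d])
| v_all : forall A G d D, valid d ->
    Permutation (concl d) (A :: map (lift 0) D) -> Permutation G (All A :: D) ->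
    valid (Node (RAll A) G [d])
| v_ex : forall A B G d D, valid d -> qfree B ->
    Permutation (concl d) (subst 0 B A :: D) -> Permutation G (Ex A :: D) ->
    valid (Node (REx A B) G [d])
| v_cp : forall A G d1 d2 D, valid d1 -> valid d2 ->
    Permutation (concl d1) (A :: D) ->
    Permutation (concl d2) (OfC A :: map WhyNot D) ->
    Permutation G (OfC A :: map WhyNot D) -> valid (Node (RCp A) G [d1; d2])
| v_hyp : forall G, valid (Node RHyp G []).

Fixpoint size (d : deriv) : nat :=
  match d with Node _ _ ps => S (list_sum (map size ps)) end.

Definition is_cp (r : rule) : bool := match r with RCp _ => true | _ => false end.
Definition is_cut (r : rule) : bool := match r with RCut _ => true | _ => false end.
Definition is_all (r : rule) : bool := match r with RAll _ => true | _ => false end.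

Fixpoint Sgen (d : deriv) : nat :=
  match d with
  | Node r G ps =>
      Nat.max (if is_cp r then length (filter is_whynot G) else 0)
              (list_max (map Sgen ps))
  end.

Fixpoint has_cut (d : deriv) : bool :=
  match d with Node r _ ps => is_cut r || existsb has_cut ps end.

Definition cut_free (d : deriv) : Prop := has_cut d = false.

Definition rmap (f : nat -> formula -> formula) (k : nat) (r : rule) : rule :=
  match r with
  | RAx A => RAx (f k A)
  | RCut A => RCut (f k A)
  | RTens A B => RTens (f k A) (f k B)
  | RPar A B => RPar (f k A) (f k B)
  | ROne => ROne
  | RBot => RBot
  | RWk A => RWk (f k A)
  | RAbs A => RAbs (f k A)
  | RAll A => RAll (f (S k) A)
  | REx A B => REx (f (S k) A) (f k B)
  | RCp A => RCp (f k A)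
  | RHyp => RHyp
  end.

Fixpoint dmap (f : nat -> formula -> formula) (k : nat) (d : deriv) : deriv :=
  match d with
  | Node r G ps =>
      Node (rmap f k r) (map (f k) G)
           (map (dmap f (if is_all r then S k else k)) ps)
  end.

Definition dlift (d : deriv) : deriv := dmap lift 0 d.
Definition dsubst (B : formula) (d : deriv) : deriv :=
  dmap (fun k => subst k (Nat.iter k (lift 0) B)) 0 d.

Inductive kind : Type := Princ | Comm.

Inductive wk_stack : list formula -> deriv -> deriv -> Prop :=
| wk_nil : forall p, wk_stack [] p p
| wk_cons : forall E l p t G, wk_stack l p t -> wk_stack (E :: l) p (Node (RWk E) G [t]).

Inductive abs_stack : list formula -> deriv -> deriv -> Prop :=
| abs_nil : forall p, abs_stack [] p p
| abs_cons : forall E l p t G, abs_stack l p t ->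
    abs_stack (E :: l) p (Node (RAbs E) G [t]).

(* principal formula of a (non-cut) rule with context *)
Inductive unary_comm : rule -> formula -> Prop :=
| uc_par : forall A B, unary_comm (RPar A B) (Par A B)
| uc_bot : unary_comm RBot Bot
| uc_wk : forall A, unary_comm (RWk A) (WhyNot A)
| uc_abs : forall A, unary_comm (RAbs A) (WhyNot A)
| uc_ex : forall A B, unary_comm (REx A B) (Ex A).

(* redex k C d1 d2 res : a cut on C between d1 (containing C) and d2
   (containing C^perp) rewrites to res.  Conclusions of the new inner nodes
   are left free; they are constrained by validity of the result. *)
Inductive redex : kind -> formula -> deriv -> deriv -> deriv -> Prop :=
| r_ax : forall C A G1 d2, redex Princ C (Node (RAx A) G1 []) d2 d2
| r_tens : forall A B G1 G2 p1 p2 q D D',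
    redex Princ (Tens A B) (Node (RTens A B) G1 [p1; p2])
      (Node (RPar (dual A) (dual B)) G2 [q])
      (Node (RCut A) D [p1; Node (RCut B) D' [p2; q]])
| r_one : forall G1 G2 q,
    redex Princ One (Node ROne G1 []) (Node RBot G2 [q]) q
| r_all : forall A B G1 G2 p q D,
    redex Princ (All A) (Node (RAll A) G1 [p]) (Node (REx (dual A) B) G2 [q])
      (Node (RCut (subst 0 B A)) D [dsubst B p; q])
| r_cpcp : forall A E G1 G2 p1 q1 p2 q2 D D1 D2,
    redex Princ (OfC A) (Node (RCp A) G1 [p1; q1]) (Node (RCp E) G2 [p2; q2])
      (Node (RCp E) D [Node (RCut A) D1 [p1; p2]; Node (RCut (OfC A)) D2 [q1; q2]])
| r_cpw : forall A G1 G2 p q pi l res,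
    Permutation G1 (OfC A :: map WhyNot l) ->
    wk_stack l pi res ->
    redex Princ (OfC A) (Node (RCp A) G1 [p; q]) (Node (RWk (dual A)) G2 [pi]) res
| r_cpb : forall A G1 G2 p q pi l D D' res,
    Permutation G1 (OfC A :: map WhyNot l) ->
    abs_stack l (Node (RCut A) D [p; Node (RCut (OfC A)) D' [q; pi]]) res ->
    redex Princ (OfC A) (Node (RCp A) G1 [p; q]) (Node (RAbs (dual A)) G2 [pi]) res
(* commutative steps: the cut formula C is in the context of the last rule of d1 *)
| c_hyp : forall C G1 d2 D, redex Comm C (Node RHyp G1 []) d2 (Node RHyp D [])
| c_unary : forall C r P G1 ctx p d2 D D',
    unary_comm r P -> Permutation G1 (P :: ctx) -> In C ctx ->
    redex Comm C (Node r G1 [p]) d2 (Node r D [Node (RCut C) D' [p; d2]])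
| c_all : forall C A G1 ctx p d2 D D',
    Permutation G1 (All A :: ctx) -> In C ctx ->
    redex Comm C (Node (RAll A) G1 [p]) d2
      (Node (RAll A) D [Node (RCut (lift 0 C)) D' [p; dlift d2]])
| c_tens_l : forall C A B G1 ctx p1 p2 d2 D D',
    Permutation G1 (Tens A B :: ctx) -> In C ctx ->
    redex Comm C (Node (RTens A B) G1 [p1; p2]) d2
      (Node (RTens A B) D [Node (RCut C) D' [p1; d2]; p2])
| c_tens_r : forall C A B G1 ctx p1 p2 d2 D D',
    Permutation G1 (Tens A B :: ctx) -> In C ctx ->
    redex Comm C (Node (RTens A B) G1 [p1; p2]) d2
      (Node (RTens A B) D [p1; Node (RCut C) D' [p2; d2]]).

(* one step, at the root (cut is symmetric) or inside any premise *)
Inductive step : kind -> deriv -> deriv -> Prop :=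
| st_root : forall k C G d1 d2 res,
    (redex k C d1 d2 res \/ redex k (dual C) d2 d1 res) ->
    Permutation (concl res) G ->
    step k (Node (RCut C) G [d1; d2]) res
| st_ctx : forall k r G ps1 d d' ps2,
    step k d d' -> step k (Node r G (ps1 ++ d :: ps2)) (Node r G (ps1 ++ d' :: ps2)).

Definition cut_step (k : kind) (d d' : deriv) : Prop := step k d d' /\ valid d'.

Definition reduction_seq (allowed : kind -> Prop) (Ds : nat -> deriv) (n : nat) : Prop :=
  forall i, i < n -> exists k, allowed k /\ cut_step k (Ds i) (Ds (S i)).

Definition normal (d : deriv) : Prop := ~ exists k d', cut_step k d d'.

From Stdlib Require Import List Arith Lia Permutation.
Import ListNotations.

(* Principal steps strictly decrease the weight of a derivation, which charges
   1 per cut, 2 per other rule and 3 + 2k per cp rule with k formulas in its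
   conclusion: the extra weight of a cp rule pays for the k weakenings or
   absorptions it may leave behind. Commutative steps increase neither weight
   nor size and strictly decrease the cut mass, the total size of the
   subderivations ending in a cut. The initial weight is at most 7 max(1, S(D)) |D|
   and bounds every later size, and the cut mass is at most the square of the
   size, so the lexicographic measure (weight, cut mass) gives the cubic bound
   and the weight alone the linear bound for principal reductions. Finally, a
   cut between cut-free premises can always be reduced: either its formula sits
   in a context and the cut commutes upwards, or it is principal on both sides,
   one of which is positive, and a principal step applies. *)

(** * Duality, lifting and substitution *)

Lemma formula_eq_dec (A B : formula) : {A = B} + {A <> B}.
Proof. decide equality; apply Nat.eq_dec. Qed.

Lemma dual_involutive (A : formula) : dual (dual A) = A.
Proof. induction A; simpl; congruence. Qed.

Ltac index_cases := simpl; repeat (cbn -[Nat.eqb Nat.ltb]; match goal with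
 | |- context [?a <? ?b] => destruct (Nat.ltb_spec a b)
 | |- context [?a =? ?b] => destruct (Nat.eqb_spec a b)
 end); try lia; try reflexivity; try (f_equal; lia).

Lemma lift_dual (A : formula) k : lift k (dual A) = dual (lift k A).
Proof. revert k; induction A; intros k; simpl; congruence. Qed.

Lemma subst_dual (A : formula) k B : subst k B (dual A) = dual (subst k B A).
Proof.
  revert k B; induction A; intros k B; simpl; try congruence; index_cases.
  all: now rewrite ?dual_involutive.
Qed.

Lemma lift_lift (A : formula) i j : i <= j -> lift i (lift j A) = lift (S j) (lift i A).
Proof.
  revert i j; induction A; intros i j Hij; simpl; f_equal; auto with arith; index_cases.
Qed.

Lemma subst_lift (A : formula) k B : subst k B (lift k A) = A.
Proof. revert k B; induction A; intros k B; simpl; try (f_equal; auto; fail); index_cases. Qed.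

Lemma subst_lift_comm (A : formula) j k C : j <= k ->
  subst (S k) (lift j C) (lift j A) = lift j (subst k C A).
Proof.
  revert j k C; induction A; intros j k C Hjk; simpl; try (f_equal; auto; fail).
  - index_cases.
  - index_cases; now rewrite lift_dual.
  - rewrite <- IHA, (lift_lift C 0 j) by lia; reflexivity.
  - rewrite <- IHA, (lift_lift C 0 j) by lia; reflexivity.
Qed.

Lemma lift_subst (A : formula) j k B : j <= k ->
  lift k (subst j B A) = subst j (lift k B) (lift (S k) A).
Proof.
  revert j k B; induction A; intros j k B Hjk; simpl; try (f_equal; auto; fail).
  - index_cases.
  - index_cases; now rewrite lift_dual.
  - rewrite IHA, (lift_lift B 0 k) by lia; reflexivity.
  - rewrite IHA, (lift_lift B 0 k) by lia; reflexivity.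
Qed.

Lemma subst_subst (A : formula) j k B C : j <= k ->
  subst k C (subst j B A) = subst j (subst k C B) (subst (S k) (lift j C) A).
Proof.
  revert j k B C; induction A; intros j k B C Hjk; simpl; try (f_equal; auto; fail).
  - index_cases; now rewrite subst_lift.
  - index_cases; now rewrite ?subst_dual, ?subst_lift.
  - rewrite IHA, subst_lift_comm, (lift_lift C 0 j) by lia; reflexivity.
  - rewrite IHA, subst_lift_comm, (lift_lift C 0 j) by lia; reflexivity.
Qed.

Lemma qfree_dual (A : formula) : qfree A -> qfree (dual A).
Proof. induction A; simpl; tauto. Qed.

Lemma qfree_lift (A : formula) k : qfree A -> qfree (lift k A).
Proof. revert k; induction A; simpl; intros; try tauto; auto; split; firstorder. Qed.

Lemma qfree_subst (A : formula) k B : qfree B -> qfree A -> qfree (subst k B A).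
Proof.
  revert k B; induction A; intros k B HB HA; simpl in *;
    try (destruct HA; split; auto; fail); try tauto; auto using qfree_lift.
  all: index_cases; simpl; auto using qfree_dual.
Qed.

Lemma qfree_iter_lift k (B : formula) : qfree B -> qfree (Nat.iter k (lift 0) B).
Proof. induction k; simpl; auto using qfree_lift. Qed.

Definition occ (l : list formula) (x : formula) : nat := count_occ formula_eq_dec l x.
Definition occ1 (a x : formula) : nat := if formula_eq_dec a x then 1 else 0.
Arguments occ : simpl never.
Arguments occ1 : simpl never.

Lemma occ_cons a l x : occ (a :: l) x = occ1 a x + occ l x.
Proof. unfold occ, occ1; simpl; destruct (formula_eq_dec a x); lia. Qed.

Lemma occ_nil x : occ [] x = 0.
Proof. reflexivity. Qed.

Lemma occ_app l1 l2 x : occ (l1 ++ l2) x = occ l1 x + occ l2 x.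
Proof. apply count_occ_app. Qed.

Lemma Permutation_occ l1 l2 : Permutation l1 l2 <-> forall x, occ l1 x = occ l2 x.
Proof. apply Permutation_count_occ. Qed.

(* Permutation goals are decided from the permutation hypotheses by linear
   arithmetic on occurrence counts. *)
Ltac perm :=
  repeat match goal with H : Permutation _ _ |- _ =>
    let H' := fresh "Hocc" in pose proof (proj1 (Permutation_occ _ _) H) as H'; clear H end;
  apply Permutation_occ; let x := fresh "x" in intro x;
  repeat match goal with H : forall y : formula, occ _ y = occ _ y |- _ => specialize (H x) end;
  rewrite ?map_app in *; cbn [map app concl dual] in *;
  repeat progress (rewrite ?occ_cons, ?occ_app, ?occ_nil in *); lia.

Lemma Permutation_cons_of_in (x : formula) l : In x l -> exists l', Permutation l (x :: l').
Proof.
  intros H; apply in_split in H as [l1 [l2 ->]].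
  exists (l1 ++ l2); apply Permutation_sym, Permutation_middle.
Qed.

Lemma in_of_Permutation_cons (x : formula) l l' : Permutation l (x :: l') -> In x l.
Proof. intros H; eapply Permutation_in; [symmetry; exact H | left; auto]. Qed.

Lemma in_map_WhyNot X D : In X (map WhyNot D) -> exists Y, X = WhyNot Y /\ In Y D.
Proof. intros H; apply in_map_iff in H as [Y [<- HY]]; eauto. Qed.

Lemma Permutation_filter (f : formula -> bool) l l' :
  Permutation l l' -> Permutation (filter f l) (filter f l').
Proof.
  induction 1 as [| x l l' _ IH | x y l | l l' l'' _ IH1 _ IH2]; simpl.
  - constructor.
  - destruct (f x); auto.
  - destruct (f x), (f y); auto using perm_swap.
  - eauto using Permutation_trans.
Qed.

Lemma filter_map_WhyNot D : filter is_whynot (map WhyNot D) = map WhyNot D.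
Proof. induction D; simpl; congruence. Qed.

Fixpoint deriv_ind' (P : deriv -> Prop)
  (H : forall r G ps, Forall P ps -> P (Node r G ps)) (d : deriv) : P d :=
  match d with
  | Node r G ps => H r G ps
      ((fix go (l : list deriv) : Forall P l :=
          match l with
          | [] => @Forall_nil _ P
          | x :: l' => @Forall_cons _ P x l' (deriv_ind' P H x) (go l')
          end) ps)
  end.

Definition rule_of (d : deriv) : rule := match d with Node r _ _ => r end.

Lemma concl_dmap f k d : concl (dmap f k d) = map (f k) (concl d).
Proof. now destruct d. Qed.

Lemma valid_premise r G ps p : valid (Node r G ps) -> In p ps -> valid p.
Proof.
  intros H Hin; inversion H; subst; simpl in Hin;
    repeat (destruct Hin as [<-|Hin]; auto); contradiction.
Qed.

Lemma valid_replace_premise r G ps1 d ps2 d' :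
  valid (Node r G (ps1 ++ d :: ps2)) -> valid d' -> Permutation (concl d') (concl d) ->
  valid (Node r G (ps1 ++ d' :: ps2)).
Proof.
  intros H Hv Hp.
  destruct ps1 as [|x [|y ps1]]; simpl in *; inversion H; subst;
    try (destruct ps1; discriminate);
    econstructor; eauto; eapply Permutation_trans; eauto.
  all: apply perm_skip, Permutation_sym; auto.
Qed.

Section ValidDmap.

Variable F : nat -> formula -> formula.
Hypothesis F_dual : forall k A, F k (dual A) = dual (F k A).
Hypothesis F_Tens : forall k A B, F k (Tens A B) = Tens (F k A) (F k B).
Hypothesis F_Par : forall k A B, F k (Par A B) = Par (F k A) (F k B).
Hypothesis F_OfC : forall k A, F k (OfC A) = OfC (F k A).
Hypothesis F_WhyNot : forall k A, F k (WhyNot A) = WhyNot (F k A).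
Hypothesis F_One : forall k, F k One = One.
Hypothesis F_Bot : forall k, F k Bot = Bot.
Hypothesis F_All : forall k A, F k (All A) = All (F (S k) A).
Hypothesis F_Ex : forall k A, F k (Ex A) = Ex (F (S k) A).
Hypothesis F_lift : forall k A, F (S k) (lift 0 A) = lift 0 (F k A).
Hypothesis F_subst : forall k A B, F k (subst 0 B A) = subst 0 (F k B) (F (S k) A).
Hypothesis F_qfree : forall k B, qfree B -> qfree (F k B).

Ltac map_perm H k := apply (Permutation_map (F k)) in H; simpl in H;
  rewrite ?map_app, ?F_dual, ?F_Tens, ?F_Par, ?F_OfC, ?F_WhyNot, ?F_One, ?F_Bot,
    ?F_All, ?F_Ex, ?F_subst in H;
  rewrite ?concl_dmap; exact H.

Lemma map_F_lift k D : map (F (S k)) (map (lift 0) D) = map (lift 0) (map (F k) D).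
Proof. rewrite !map_map; apply map_ext; auto. Qed.

Lemma map_F_WhyNot k D : map (F k) (map WhyNot D) = map WhyNot (map (F k) D).
Proof. rewrite !map_map; apply map_ext; auto. Qed.

Lemma valid_dmap d : valid d -> forall k, valid (dmap F k d).
Proof.
  induction 1; intros k; simpl.
  - constructor; map_perm H k.
  - apply v_cut with (G1 := map (F k) G1) (G2 := map (F k) G2); auto;
      [map_perm H1 k | map_perm H2 k | map_perm H3 k].
  - apply v_tens with (G1 := map (F k) G1) (G2 := map (F k) G2); auto;
      [map_perm H1 k | map_perm H2 k | map_perm H3 k].
  - apply v_par with (D := map (F k) D); auto; [map_perm H0 k | map_perm H1 k].
  - constructor; map_perm H k.
  - constructor; auto; map_perm H0 k.
  - constructor; auto; map_perm H0 k.
  - apply v_abs with (D := map (F k) D); auto; [map_perm H0 k | map_perm H1 k].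
  - apply v_all with (D := map (F k) D); auto; [|map_perm H1 k].
    rewrite <- map_F_lift; map_perm H0 (S k).
  - apply v_ex with (D := map (F k) D); auto; [map_perm H1 k | map_perm H2 k].
  - apply v_cp with (D := map (F k) D); auto; rewrite <- ?map_F_WhyNot;
      [map_perm H1 k | map_perm H2 k | map_perm H3 k].
  - constructor.
Qed.

End ValidDmap.

Lemma valid_dlift d : valid d -> valid (dlift d).
Proof.
  intros H; apply valid_dmap; auto; intros; simpl; auto.
  - apply lift_dual.
  - symmetry; apply lift_lift; lia.
  - apply lift_subst; lia.
  - apply qfree_lift; auto.
Qed.

Lemma valid_dsubst B d : qfree B -> valid d -> valid (dsubst B d).
Proof.
  intros HB H; apply valid_dmap; auto; intros; simpl; auto.
  - apply subst_dual.
  - apply subst_lift_comm; lia.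
  - apply subst_subst; lia.
  - apply qfree_subst; auto using qfree_iter_lift.
Qed.

(** * Measures and their behaviour under cut elimination *)

Definition rule_weight (r : rule) (G : list formula) : nat :=
  match r with RCut _ => 1 | RCp _ => 3 + 2 * length G | _ => 2 end.

Fixpoint weight (d : deriv) : nat :=
  match d with Node r G ps => rule_weight r G + list_sum (map weight ps) end.

Fixpoint cut_mass (d : deriv) : nat :=
  match d with Node r G ps =>
    (if is_cut r then size (Node r G ps) else 0) + list_sum (map cut_mass ps) end.

Lemma list_sum_map_dmap (X : deriv -> nat) f k ps :
  Forall (fun p => forall k, X (dmap f k p) = X p) ps ->
  list_sum (map X (map (dmap f k) ps)) = list_sum (map X ps).
Proof. induction 1; simpl; auto. Qed.

Lemma size_dmap f d k : size (dmap f k d) = size d.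
Proof.
  revert k; induction d using deriv_ind'; intros k; simpl.
  f_equal; apply (list_sum_map_dmap size); auto.
Qed.

Lemma weight_dmap f d k : weight (dmap f k d) = weight d.
Proof.
  revert k; induction d using deriv_ind'; intros k; simpl.
  rewrite (list_sum_map_dmap weight); auto.
  f_equal; destruct r; simpl; rewrite ?length_map; auto.
Qed.

Lemma cut_mass_dmap f d k : cut_mass (dmap f k d) = cut_mass d.
Proof.
  revert k; induction d using deriv_ind'; intros k.
  change (cut_mass (dmap f k (Node r G ps))) with
   ((if is_cut (rmap f k r) then size (dmap f k (Node r G ps)) else 0)
    + list_sum (map cut_mass (map (dmap f (if is_all r then S k else k)) ps))).
  rewrite size_dmap, (list_sum_map_dmap cut_mass); auto.
  now destruct r.
Qed.

Lemma size_pos d : 1 <= size d.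
Proof. destruct d; simpl; lia. Qed.

Lemma weight_pos d : 1 <= weight d.
Proof. destruct d as [r G ps]; destruct r; simpl; lia. Qed.

Lemma size_le_weight d : size d <= weight d.
Proof.
  induction d as [r G ps IH] using deriv_ind'.
  assert (list_sum (map size ps) <= list_sum (map weight ps)) by (induction IH; simpl; lia).
  destruct r; simpl; lia.
Qed.

Lemma cut_mass_le_size_sq d : cut_mass d <= size d * size d.
Proof.
  induction d as [r G ps IH] using deriv_ind'.
  assert (list_sum (map cut_mass ps) <= list_sum (map size ps) * list_sum (map size ps))
    by (induction IH; simpl; nia).
  simpl; destruct (is_cut r); simpl; nia.
Qed.

Lemma Sgen_premise r G ps p : In p ps -> Sgen p <= Sgen (Node r G ps).
Proof.
  intros Hp; simpl.
  pose proof (proj1 (list_max_le (map Sgen ps) _) (le_n _)) as Hmax.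
  rewrite Forall_forall in Hmax; specialize (Hmax _ (in_map Sgen _ _ Hp)); lia.
Qed.

Lemma rule_weight_le_Sgen d : valid d -> forall r G ps, d = Node r G ps ->
  rule_weight r G <= 5 + 2 * Sgen d.
Proof.
  intros Hv r G ps ->.
  inversion Hv as [| | | | | | | | | | A G' d1 d2 D _ _ _ _ HG |]; subst; simpl; try lia.
  apply Permutation_length in HG as Hlen; simpl in Hlen; rewrite length_map in Hlen.
  apply (Permutation_filter is_whynot), Permutation_length in HG.
  simpl in HG; rewrite filter_map_WhyNot, length_map in HG; lia.
Qed.

Lemma list_sum_weight_le s ps :
  Forall (fun p => weight p <= (5 + 2 * Sgen p) * size p /\ Sgen p <= s) ps ->
  list_sum (map weight ps) <= (5 + 2 * s) * list_sum (map size ps).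
Proof. induction 1 as [|p ps [Hp Hs] _ IH]; simpl; nia. Qed.

Lemma weight_le_Sgen_size d : valid d -> weight d <= (5 + 2 * Sgen d) * size d.
Proof.
  induction d as [r G ps IH] using deriv_ind'; intros Hv.
  pose proof (rule_weight_le_Sgen _ Hv r G ps eq_refl).
  assert (list_sum (map weight ps) <= (5 + 2 * Sgen (Node r G ps)) * list_sum (map size ps)).
  { apply list_sum_weight_le, Forall_forall; intros p Hp; rewrite Forall_forall in IH.
    eauto using valid_premise, Sgen_premise. }
  simpl in *; nia.
Qed.

Lemma weight_le_max_Sgen_size d : valid d -> weight d <= 7 * (Nat.max 1 (Sgen d) * size d).
Proof. intros Hv; pose proof (weight_le_Sgen_size d Hv); nia. Qed.

Lemma wk_stack_measures l p t : wk_stack l p t ->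
  weight t = 2 * length l + weight p /\ size t = length l + size p /\ cut_mass t = cut_mass p.
Proof. induction 1; simpl; lia. Qed.

Lemma abs_stack_measures l p t : abs_stack l p t ->
  weight t = 2 * length l + weight p /\ size t = length l + size p.
Proof. induction 1; simpl; lia. Qed.

Lemma redex_principal_weight C a b res : redex Princ C a b res ->
  length (concl res) + 2 = length (concl a) + length (concl b) ->
  weight res < 1 + weight a + weight b.
Proof.
  remember Princ as k eqn:Hk; intros H Hlen;
    destruct H as [| | | | | A G1 G2 p q pi l res HG Hst | A G1 G2 p q pi l D D' res HG Hst | | | | |];
    try discriminate; simpl in *; try lia.
  - unfold dsubst; rewrite weight_dmap; lia.
  - apply wk_stack_measures in Hst; apply Permutation_length in HG.
    simpl in HG; rewrite length_map in HG; pose proof (weight_pos q); lia.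
  - apply abs_stack_measures in Hst; apply Permutation_length in HG.
    simpl in HG, Hst; rewrite length_map in HG; lia.
Qed.

Lemma redex_commutative_measures C a b res : redex Comm C a b res ->
  weight res <= 1 + weight a + weight b /\ size res <= 1 + size a + size b /\
  cut_mass res < 1 + size a + size b + cut_mass a + cut_mass b.
Proof.
  remember Comm as k eqn:Hk; intros H;
    destruct H as [| | | | | | | | C r P G1 ctx p d2 D D' Hr | | |];
    try discriminate; simpl; try lia.
  - destruct Hr; simpl; lia.
  - unfold dlift; rewrite weight_dmap, size_dmap, cut_mass_dmap; lia.
Qed.

Lemma valid_cut_length C G d1 d2 : valid (Node (RCut C) G [d1; d2]) ->
  length G + 2 = length (concl d1) + length (concl d2).
Proof.
  intros H; inversion H as [| A G' d1' d2' G1 G2 _ _ H1 H2 H3 | | | | | | | | | |]; subst.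
  apply Permutation_length in H1, H2, H3; rewrite length_app in H3; simpl in *; lia.
Qed.

Lemma step_principal_weight d d' : step Princ d d' -> valid d -> weight d' < weight d.
Proof.
  remember Princ as k eqn:Hk; induction 1 as [k C G d1 d2 res Hred HG | k r G ps1 d d' ps2 _ IH];
    intros Hv; subst.
  - apply valid_cut_length in Hv; apply Permutation_length in HG; simpl.
    destruct Hred as [Hred | Hred]; apply redex_principal_weight in Hred; lia.
  - assert (Hvd : valid d) by (eapply valid_premise; eauto using in_elt).
    specialize (IH eq_refl Hvd); simpl; rewrite !map_app, !list_sum_app; simpl; lia.
Qed.

Lemma step_commutative_measures d d' : step Comm d d' -> valid d ->
  weight d' <= weight d /\ size d' <= size d /\ cut_mass d' < cut_mass d.
Proof.
  remember Comm as k eqn:Hk; induction 1 as [k C G d1 d2 res Hred HG | k r G ps1 d d' ps2 _ IH];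
    intros Hv; subst.
  - simpl; destruct Hred as [Hred | Hred]; apply redex_commutative_measures in Hred; lia.
  - assert (Hvd : valid d) by (eapply valid_premise; eauto using in_elt).
    specialize (IH eq_refl Hvd); simpl; rewrite !map_app, !list_sum_app; simpl.
    destruct (is_cut r); simpl; rewrite ?map_app, ?list_sum_app; simpl; lia.
Qed.

Lemma cut_step_weight_le k d d' : cut_step k d d' -> valid d -> weight d' <= weight d.
Proof.
  intros [Hs _] Hv; destruct k.
  - apply step_principal_weight in Hs; auto; lia.
  - apply step_commutative_measures in Hs; tauto.
Qed.

(** * Bounds on reduction sequences *)

Lemma strictly_decreasing_length (f : nat -> nat) n :
  (forall i, i < n -> f (S i) < f i) -> n + f n <= f 0.
Proof.
  induction n as [|n IH]; intros Hdec; [lia|].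
  specialize (IH (fun i Hi => Hdec i (Nat.lt_lt_succ_r _ _ Hi))).
  specialize (Hdec n (Nat.lt_succ_diag_r n)); lia.
Qed.

Lemma nonincreasing_le_first (f : nat -> nat) n :
  (forall i, i < n -> f (S i) <= f i) -> forall i, i <= n -> f i <= f 0.
Proof.
  intros Hdec i; induction i as [|i IH]; intros Hi; [lia|].
  specialize (Hdec i Hi); specialize (IH (Nat.lt_le_incl _ _ Hi)); lia.
Qed.

Section ReductionSequence.

Variables (allowed : kind -> Prop) (Ds : nat -> deriv) (n : nat).
Hypothesis valid_first : valid (Ds 0).
Hypothesis reduces : reduction_seq allowed Ds n.

Lemma reduction_seq_valid i : i <= n -> valid (Ds i).
Proof.
  induction i as [|i IH]; intros Hi; auto.
  destruct (reduces i Hi) as [k [_ [_ Hv]]]; auto.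
Qed.

Lemma reduction_seq_weight_le i : i <= n -> weight (Ds i) <= weight (Ds 0).
Proof.
  revert i; apply (nonincreasing_le_first (fun i => weight (Ds i))); intros j Hj.
  destruct (reduces j Hj) as [k [_ Hstep]].
  eapply cut_step_weight_le; eauto using reduction_seq_valid, Nat.lt_le_incl.
Qed.

Lemma reduction_seq_size_le i : i <= n -> size (Ds i) <= weight (Ds 0).
Proof.
  intros Hi; pose proof (size_le_weight (Ds i)); pose proof (reduction_seq_weight_le i Hi); lia.
Qed.

(* Lexicographic descent on (weight, cut_mass): the factor [K] exceeds every
   cut mass met along the sequence, since [cut_mass <= size^2 <= weight^2]. *)
Lemma reduction_seq_length : n <= 3 * weight (Ds 0) ^ 3.
Proof.
  set (W := weight (Ds 0)); set (K := W * W + 1).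
  assert (Hlex : n + (weight (Ds n) * K + cut_mass (Ds n)) <= W * K + cut_mass (Ds 0)).
  { apply (strictly_decreasing_length (fun i => weight (Ds i) * K + cut_mass (Ds i))).
    intros i Hi.
    destruct (reduces i Hi) as [[|] [_ [Hstep _]]];
      pose proof (reduction_seq_valid i (Nat.lt_le_incl _ _ Hi)) as Hv.
    - apply step_principal_weight in Hstep; auto.
      assert (cut_mass (Ds (S i)) < K).
      { pose proof (cut_mass_le_size_sq (Ds (S i))).
        pose proof (reduction_seq_size_le (S i) Hi); unfold K; nia. }
      nia.
    - apply step_commutative_measures in Hstep as (Hw & _ & Hc); auto; nia. }
  pose proof (cut_mass_le_size_sq (Ds 0)) as Hmass; pose proof (size_le_weight (Ds 0)) as Hsize.
  pose proof (weight_pos (Ds 0)); fold W in Hmass, Hsize.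
  unfold K in Hlex; simpl; nia.
Qed.

End ReductionSequence.

Lemma principal_reduction_seq_length Ds n : valid (Ds 0) ->
  reduction_seq (fun k => k = Princ) Ds n -> n <= weight (Ds 0).
Proof.
  intros H0 Hred.
  enough (n + weight (Ds n) <= weight (Ds 0)) by lia.
  apply (strictly_decreasing_length (fun i => weight (Ds i))); intros i Hi.
  destruct (Hred i Hi) as [k [-> [Hstep _]]].
  eapply step_principal_weight; eauto using reduction_seq_valid, Nat.lt_le_incl.
Qed.

(** * Progress: a derivation with a cut can be reduced *)

(* Cut and cp rules count every formula of their conclusion as principal: no
   commutative step moves a cut above them. *)
Definition principal_in (r : rule) (C : formula) : Prop :=
  match r with
  | RTens A B => C = Tens A B | RPar A B => C = Par A B | ROne => C = One | RBot => C = Bot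
  | RWk A => C = WhyNot A | RAbs A => C = WhyNot A | RAll A => C = All A | REx A _ => C = Ex A
  | RCp _ => True | RCut _ => True | RAx _ => False | RHyp => False
  end.

Definition positive_principal_in (r : rule) (C : formula) : Prop :=
  match r with
  | RTens A B => C = Tens A B | ROne => C = One | RAll A => C = All A | RCp A => C = OfC A
  | _ => False
  end.

Definition negative (C : formula) : Prop :=
  match C with Par _ _ | Bot | WhyNot _ | Ex _ => True | _ => False end.

Lemma principal_in_dec r C : {principal_in r C} + {~ principal_in r C}.
Proof.
  destruct r; simpl; try (left; exact I); try (right; intro; contradiction);
    apply formula_eq_dec.
Qed.

Lemma positive_principal_in_dec r C :
  {positive_principal_in r C} + {~ positive_principal_in r C}.
Proof. destruct r; simpl; try (right; intro; contradiction); apply formula_eq_dec. Qed.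

Lemma in_context (C P : formula) G ctx :
  Permutation G (P :: ctx) -> In C G -> C <> P -> exists l, Permutation ctx (C :: l).
Proof.
  intros HG HC HCP; eapply Permutation_in in HC; [|exact HG].
  destruct HC as [-> | HC]; [congruence | auto using Permutation_cons_of_in].
Qed.

Lemma valid_cut_in_premise C p e Δ D l G2 :
  valid p -> valid e -> Permutation (concl p) (Δ ++ D) -> Permutation D (C :: l) ->
  Permutation (concl e) (dual C :: G2) -> valid (Node (RCut C) (Δ ++ l ++ G2) [p; e]).
Proof. intros; apply v_cut with (G1 := Δ ++ l) (G2 := G2); auto; perm. Qed.

Lemma valid_wk_stack l p : valid p ->
  exists t, wk_stack l p t /\ valid t /\ concl t = map WhyNot l ++ concl p.
Proof.
  induction l as [|E l IH]; intros Hv.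
  - exists p; split; [constructor | auto].
  - destruct (IH Hv) as (t & Ht & Hvt & Hc).
    exists (Node (RWk E) (WhyNot E :: concl t) [t]).
    split; [constructor; auto|]; split; [constructor; auto|]; simpl; now rewrite Hc.
Qed.

Lemma valid_abs_stack l p rest : valid p ->
  Permutation (concl p) (l ++ map WhyNot l ++ rest) ->
  exists t, abs_stack l p t /\ valid t /\ Permutation (concl t) (map WhyNot l ++ rest).
Proof.
  revert rest; induction l as [|E l IH]; intros rest Hv Hp.
  - exists p; split; [constructor | auto].
  - destruct (IH (E :: WhyNot E :: rest) Hv) as (t & Ht & Hvt & Hc); [perm|].
    exists (Node (RAbs E) (WhyNot E :: map WhyNot l ++ rest) [t]).
    split; [constructor; auto|]; split; [|apply Permutation_refl].
    apply v_abs with (D := map WhyNot l ++ rest); auto; perm.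
Qed.

Definition reducible_at_root (C : formula) (d1 d2 : deriv) (G : list formula) : Prop :=
  exists k res, (redex k C d1 d2 res \/ redex k (dual C) d2 d1 res) /\
    valid res /\ Permutation (concl res) G.

Lemma reducible_at_root_sym C d1 d2 G :
  reducible_at_root (dual C) d2 d1 G -> reducible_at_root C d1 d2 G.
Proof.
  intros (k & res & Hred & H); exists k, res; rewrite dual_involutive in Hred; tauto.
Qed.

Section CutAtRoot.

Variables (C : formula) (d1 d2 : deriv) (G1 G2 G : list formula).
Hypotheses (valid_d1 : valid d1) (valid_d2 : valid d2).
Hypothesis concl_d1 : Permutation (concl d1) (C :: G1).
Hypothesis concl_d2 : Permutation (concl d2) (dual C :: G2).
Hypothesis concl_cut : Permutation G (G1 ++ G2).

Lemma reducible_of_not_principal :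
  ~ principal_in (rule_of d1) C -> reducible_at_root C d1 d2 G.
Proof.
  intros Hpr; pose proof (in_of_Permutation_cons _ _ _ concl_d1) as HC.
  destruct valid_d1 as [A G0 Pax | | A B G0 p1 p2 Ga Gb Hq1 Hq2 P1 P2 P3
    | A B G0 p D Hq P1 P2 | G0 P | G0 p Hq P | A G0 p Hq P | A G0 p D Hq P1 P2
    | A G0 p D Hq P1 P2 | A B G0 p D Hq HB P1 P2 | | G0];
    simpl in Hpr, HC; try (exfalso; apply Hpr; exact I).
  - exists Princ, d2; split; [left; constructor | split; auto].
    eapply Permutation_in in HC; [|exact Pax].
    destruct HC as [<- | [<- | []]]; [|rewrite dual_involutive in concl_d2]; perm.
  - assert (HC' := HC); eapply Permutation_in in HC'; [|exact P3].
    destruct HC' as [HCeq | HC']; [congruence|].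
    apply in_app_or in HC' as [HC' | HC']; destruct (Permutation_cons_of_in _ _ HC') as [l Hl].
    + exists Comm, (Node (RTens A B) G [Node (RCut C) ([A] ++ l ++ G2) [p1; d2]; p2]).
      split; [left; eapply c_tens_l; eauto using in_or_app, in_of_Permutation_cons|].
      split; [|apply Permutation_refl].
      apply v_tens with (G1 := l ++ G2) (G2 := Gb);
        [apply (valid_cut_in_premise C p1 d2 [A] Ga) | ..]; auto; perm.
    + exists Comm, (Node (RTens A B) G [p1; Node (RCut C) ([B] ++ l ++ G2) [p2; d2]]).
      split; [left; eapply c_tens_r; eauto using in_or_app, in_of_Permutation_cons|].
      split; [|apply Permutation_refl].
      apply v_tens with (G1 := Ga) (G2 := l ++ G2);
        [| apply (valid_cut_in_premise C p2 d2 [B] Gb) | ..]; auto; perm.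
  - destruct (in_context C _ _ _ P2 HC Hpr) as [l Hl].
    exists Comm, (Node (RPar A B) G [Node (RCut C) ([A; B] ++ l ++ G2) [p; d2]]).
    split; [left; eapply c_unary; eauto using uc_par, in_of_Permutation_cons|].
    split; [|apply Permutation_refl].
    apply v_par with (D := l ++ G2); [apply (valid_cut_in_premise C p d2 [A; B] D)|..];
      auto; perm.
  - exfalso; eapply Permutation_in in HC; [|exact P]; destruct HC as [<- | []]; auto.
  - destruct (in_context C _ _ _ P HC Hpr) as [l Hl].
    exists Comm, (Node RBot G [Node (RCut C) ([] ++ l ++ G2) [p; d2]]).
    split; [left; eapply c_unary; eauto using uc_bot, in_of_Permutation_cons|].
    split; [|apply Permutation_refl].
    apply v_bot; [apply (valid_cut_in_premise C p d2 [] (concl p))|]; auto; perm.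
  - destruct (in_context C _ _ _ P HC Hpr) as [l Hl].
    exists Comm, (Node (RWk A) G [Node (RCut C) ([] ++ l ++ G2) [p; d2]]).
    split; [left; eapply c_unary; eauto using uc_wk, in_of_Permutation_cons|].
    split; [|apply Permutation_refl].
    apply v_wk; [apply (valid_cut_in_premise C p d2 [] (concl p))|]; auto; perm.
  - destruct (in_context C _ _ _ P2 HC Hpr) as [l Hl].
    exists Comm, (Node (RAbs A) G [Node (RCut C) ([A; WhyNot A] ++ l ++ G2) [p; d2]]).
    split; [left; eapply c_unary; eauto using uc_abs, in_of_Permutation_cons|].
    split; [|apply Permutation_refl].
    apply v_abs with (D := l ++ G2); [apply (valid_cut_in_premise C p d2 [A; WhyNot A] D)|..];
      auto; perm.
  - destruct (in_context C _ _ _ P2 HC Hpr) as [l Hl].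
    exists Comm, (Node (RAll A) G
      [Node (RCut (lift 0 C)) (A :: map (lift 0) (l ++ G2)) [p; dlift d2]]).
    split; [left; eapply c_all; eauto using in_of_Permutation_cons|].
    split; [|apply Permutation_refl].
    apply v_all with (D := l ++ G2); auto; [|perm].
    apply (Permutation_map (lift 0)) in Hl; rewrite map_app.
    apply (valid_cut_in_premise _ p (dlift d2) [A] (map (lift 0) D)); auto using valid_dlift.
    unfold dlift; rewrite concl_dmap, <- lift_dual.
    apply (Permutation_map (lift 0)) in concl_d2; exact concl_d2.
  - destruct (in_context C _ _ _ P2 HC Hpr) as [l Hl].
    exists Comm, (Node (REx A B) G [Node (RCut C) ([subst 0 B A] ++ l ++ G2) [p; d2]]).
    split; [left; eapply c_unary; eauto using uc_ex, in_of_Permutation_cons|].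
    split; [|apply Permutation_refl].
    apply v_ex with (D := l ++ G2); [apply (valid_cut_in_premise C p d2 [subst 0 B A] D)|..];
      auto; perm.
  - exists Comm, (Node RHyp G []).
    split; [left; constructor | split; [constructor | apply Permutation_refl]].
Qed.

Lemma reducible_of_positive_principal :
  positive_principal_in (rule_of d1) C -> principal_in (rule_of d2) (dual C) ->
  is_cut (rule_of d2) = false -> reducible_at_root C d1 d2 G.
Proof.
  intros Hpos Hpr Hnc; pose proof (in_of_Permutation_cons _ _ _ concl_d2) as HC2.
  destruct valid_d1 as [| | A B G0 p1 p2 Ga Gb Hp1 Hp2 P1 P2 P3 | | G0 P | | | | A G0 p D Hp P1 P2
    | | A G0 p1 p2 D Hp1 Hp2 P1 P2 P3 |];
    simpl in Hpos; try contradiction; subst C; simpl in concl_d1, HC2, Hpr;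
  (destruct valid_d2 as [| | | A' B' G0' q Dq Hq R1 R2 | | G0' q Hq R | A' G0' q Hq R
    | A' G0' q Dq Hq R1 R2 | | A' B' G0' q Dq Hq HB R1 R2 | A' G0' q1 q2 Dq Hq1 Hq2 R1 R2 R3 |];
   simpl in Hpr, Hnc, concl_d2, HC2; try contradiction; try discriminate;
   try (eapply Permutation_in in HC2; [|exact R3]; destruct HC2 as [HC2 | HC2];
        [discriminate | apply in_map_WhyNot in HC2 as (? & ? & ?); discriminate])).
  - injection Hpr as <- <-.
    exists Princ, (Node (RCut A) G [p1; Node (RCut B) (Gb ++ dual A :: Dq) [p2; q]]).
    split; [left; apply r_tens|]; split; [|apply Permutation_refl].
    apply v_cut with (G1 := Ga) (G2 := Gb ++ Dq); auto; try perm.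
    apply v_cut with (G1 := Gb) (G2 := dual A :: Dq); auto; perm.
  - exists Princ, q; split; [left; apply r_one | split; auto; perm].
  - injection Hpr as <-.
    exists Princ, (Node (RCut (subst 0 B' A)) G [dsubst B' p; q]).
    split; [left; apply r_all|]; split; [|apply Permutation_refl].
    apply v_cut with (G1 := D) (G2 := Dq); auto using valid_dsubst; [| |perm].
    + unfold dsubst; rewrite concl_dmap.
      eapply Permutation_trans; [apply Permutation_map; exact P1|].
      cbn [map Nat.iter]; rewrite map_map, (map_ext _ (fun x => x)), map_id
        by (intros; apply subst_lift); reflexivity.
    + rewrite subst_dual in R1; exact R1.
  - injection Hpr as <-.
    destruct (valid_wk_stack D q Hq) as (t & Ht & Hvt & Hct).
    exists Princ, t; split; [left; eapply r_cpw; eauto|]; split; auto.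
    rewrite Hct; perm.
  - injection Hpr as <-.
    assert (Hcut : valid (Node (RCut A) (D ++ map WhyNot D ++ Dq)
               [p1; Node (RCut (OfC A)) (map WhyNot D ++ dual A :: Dq) [p2; q]])).
    { apply v_cut with (G1 := D) (G2 := map WhyNot D ++ Dq); auto; try perm.
      apply v_cut with (G1 := map WhyNot D) (G2 := dual A :: Dq); auto; perm. }
    destruct (valid_abs_stack D _ Dq Hcut) as (t & Ht & Hvt & Hct); [reflexivity|].
    exists Princ, t; split; [left; eapply r_cpb; eauto|]; split; auto; perm.
  - eapply Permutation_in in HC2; [|exact R3]; destruct HC2 as [HC2 | HC2]; [discriminate|].
    apply in_map_WhyNot in HC2 as (Y & EY & HY); injection EY as <-.
    destruct (Permutation_cons_of_in _ _ HY) as [l Hl].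
    pose proof (Permutation_map WhyNot Hl) as Hlw.
    exists Princ, (Node (RCp A') G [Node (RCut A) (D ++ A' :: l) [p1; q1];
                    Node (RCut (OfC A)) (map WhyNot D ++ OfC A' :: map WhyNot l) [p2; q2]]).
    split; [left; apply r_cpcp|]; split; [|apply Permutation_refl].
    apply v_cp with (D := D ++ l); try perm.
    + apply v_cut with (G1 := D) (G2 := A' :: l); auto; perm.
    + apply v_cut with (G1 := map WhyNot D) (G2 := OfC A' :: map WhyNot l); auto; perm.
Qed.

End CutAtRoot.

Lemma negative_of_principal d C : valid d -> is_cut (rule_of d) = false ->
  principal_in (rule_of d) C -> ~ positive_principal_in (rule_of d) C -> In C (concl d) ->
  negative C.
Proof.
  intros Hv Hnc Hpr Hpos HC.
  destruct Hv as [| | | | | | | | | | A G p1 p2 D _ _ _ _ P |];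
    simpl in *; try discriminate; try contradiction; try (subst; exact I).
  eapply Permutation_in in HC; [|exact P]; destruct HC as [<- | HC]; [contradiction|].
  apply in_map_WhyNot in HC as (Y & -> & _); exact I.
Qed.

Lemma negative_dual C : negative C -> negative (dual C) -> False.
Proof. destruct C; simpl; tauto. Qed.

Lemma reducible_at_root_of_cut C d1 d2 G1 G2 G : valid d1 -> valid d2 ->
  Permutation (concl d1) (C :: G1) -> Permutation (concl d2) (dual C :: G2) ->
  Permutation G (G1 ++ G2) -> is_cut (rule_of d1) = false -> is_cut (rule_of d2) = false ->
  reducible_at_root C d1 d2 G.
Proof.
  intros Hv1 Hv2 Hc1 Hc2 HG Hn1 Hn2.
  assert (Hc1' : Permutation (concl d1) (dual (dual C) :: G1)) by now rewrite dual_involutive.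
  assert (HG' : Permutation G (G2 ++ G1)) by perm.
  destruct (principal_in_dec (rule_of d1) C) as [P1 | P1];
    [|eapply reducible_of_not_principal; eauto].
  destruct (principal_in_dec (rule_of d2) (dual C)) as [P2 | P2];
    [|apply reducible_at_root_sym; eapply reducible_of_not_principal; eauto].
  destruct (positive_principal_in_dec (rule_of d1) C) as [Q1 | Q1];
    [eapply reducible_of_positive_principal; eauto|].
  destruct (positive_principal_in_dec (rule_of d2) (dual C)) as [Q2 | Q2].
  - apply reducible_at_root_sym; eapply reducible_of_positive_principal; eauto.
    now rewrite dual_involutive.
  - exfalso; apply (negative_dual C);
      [apply (negative_of_principal d1) | apply (negative_of_principal d2)];
      eauto using in_of_Permutation_cons.
Qed.

Lemma step_concl k d d' : step k d d' -> Permutation (concl d') (concl d).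
Proof. induction 1; simpl; auto. Qed.

Lemma reducible_of_has_cut d : valid d -> has_cut d = true -> exists k d', cut_step k d d'.
Proof.
  induction d as [r G ps IH] using deriv_ind'; intros Hv Hc; simpl in Hc.
  destruct (existsb has_cut ps) eqn:Hps.
  - apply existsb_exists in Hps as [p [Hin Hp]]; rewrite Forall_forall in IH.
    destruct (IH p Hin (valid_premise _ _ _ _ Hv Hin) Hp) as (k & p' & Hs & Hv').
    apply in_split in Hin as (ps1 & ps2 & ->).
    exists k, (Node r G (ps1 ++ p' :: ps2)); split; [constructor; auto|].
    eapply valid_replace_premise; eauto using step_concl.
  - rewrite Bool.orb_false_r in Hc; destruct r; try discriminate.
    inversion Hv as [| C G' d1 d2 G1 G2 Hv1 Hv2 Hc1 Hc2 HG | | | | | | | | | |]; subst.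
    simpl in Hps; apply Bool.orb_false_iff in Hps as [Hn1 Hn2].
    rewrite Bool.orb_false_r in Hn2.
    assert (Hcut : forall e, has_cut e = false -> is_cut (rule_of e) = false)
      by (intros [] He; simpl in He; apply Bool.orb_false_iff in He; tauto).
    destruct (reducible_at_root_of_cut f d1 d2 G1 G2 G) as (k & res & Hred & Hvr & Hcr); auto.
    exists k, res; split; auto; constructor; auto.
Qed.

Lemma normal_cut_free Ds n : valid (Ds 0) -> reduction_seq (fun _ => True) Ds n ->
  normal (Ds n) -> cut_free (Ds n).
Proof.
  intros H0 Hred Hn; unfold cut_free.
  destruct (has_cut (Ds n)) eqn:Hc; auto.
  exfalso; apply Hn, reducible_of_has_cut; auto.
  apply (reduction_seq_valid (fun _ => True) Ds n); auto.
Qed.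

Theorem mainTheorem5 :
  (* 1. arbitrary steps: O(S(D)^3 * |D|^3) *)
  (exists c : nat, forall (Ds : nat -> deriv) (n : nat),
     valid (Ds 0) -> reduction_seq (fun _ => True) Ds n ->
     n <= c * (Nat.max 1 (Sgen (Ds 0)) ^ 3 * size (Ds 0) ^ 3) /\
     (forall i, i <= n -> size (Ds i) <= c * (Nat.max 1 (Sgen (Ds 0)) ^ 3 * size (Ds 0) ^ 3)))
  /\
  (* 2. principal steps only: O(S(D) * |D|) *)
  (exists c : nat, forall (Ds : nat -> deriv) (n : nat),
     valid (Ds 0) -> reduction_seq (fun k => k = Princ) Ds n ->
     n <= c * (Nat.max 1 (Sgen (Ds 0)) * size (Ds 0)) /\
     (forall i, i <= n -> size (Ds i) <= c * (Nat.max 1 (Sgen (Ds 0)) * size (Ds 0))))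
  /\
  (* 3. maximal reduction sequences end in cut-free derivations *)
  (forall (Ds : nat -> deriv) (n : nat),
     valid (Ds 0) -> reduction_seq (fun _ => True) Ds n -> normal (Ds n) ->
     cut_free (Ds n)).
Proof.
  split; [|split].
  - exists 1029; intros Ds n H0 Hred.
    pose proof (weight_le_max_Sgen_size _ H0) as HW.
    pose proof (size_pos (Ds 0)) as Hsize.
    rewrite <- Nat.pow_mul_l.
    set (X := Nat.max 1 (Sgen (Ds 0)) * size (Ds 0)) in *.
    assert (HX : X <= X ^ 3) by (assert (1 <= X) by (unfold X; nia); simpl; nia).
    assert (HW3 : weight (Ds 0) ^ 3 <= 343 * X ^ 3)
      by (change 343 with (7 ^ 3); rewrite <- Nat.pow_mul_l; apply Nat.pow_le_mono_l, HW).
    split; [pose proof (reduction_seq_length _ _ _ H0 Hred); lia|].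
    intros i Hi; pose proof (reduction_seq_size_le _ _ _ H0 Hred i Hi); lia.
  - exists 7; intros Ds n H0 Hred.
    pose proof (weight_le_max_Sgen_size _ H0).
    split; [pose proof (principal_reduction_seq_length _ _ H0 Hred); lia|].
    intros i Hi; pose proof (reduction_seq_size_le _ _ _ H0 Hred i Hi); lia.
  - exact normal_cut_free.
Qed.
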